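(* Let ${\bf S}$ be any logic over $For$ (a consequence relation $\vdash_{\bf S}$) lying between ${\bf Km}$ and ${\bf T45m}$, i.e. $\Gamma\vdash_{\bf Km}\alpha$ implies $\Gamma\vdash_{\bf S}\alpha$, and $\Gamma\vdash_{\bf S}\alpha$ implies $\Gamma\vdash_{\bf T45m}\alpha$, for all $\Gamma\cup\{\alpha\}\subseteq For$. Then ${\bf S}$ cannot be characterized by a single finite deterministic logical matrix; that is, there is no logical matrix $\mathcal M=\langle M,D\rangle$ with $M$ finite such that, for all $\Gamma\cup\{\alpha\}\subseteq For$, $\Gamma\vdash_{\bf S}\alpha$ iff $\Gamma\vDash_{\mathcal M}\alpha$.
   Context: Formulas are built from a denumerable set of propositional variables by the unary connectives $\neg$, $\Box$ and the binary connective $\to$; $For$ is the set of all formulas. Abbreviations: $\Diamond\alpha:=\neg\Box\neg\alpha$, $\alpha\vee\beta:=\neg\alpha\to\beta$, $\alpha\wedge\beta:=\neg(\alpha\to\neg\beta)$. All Hilbert calculi below have as axioms all instances (over $For$) of the axiom schemas of a standard Hilbert calculus for classical propositional logic in the signature $\{\neg,\to\}$, plus the listed modal schemas, with modus ponens as the only rule; $\Gamma\vdash_{\bf L}\alpha$ means there is a derivation of $\alpha$ from $\Gamma$ in ${\bf L}$. ${\bf Km}$: (K') $\Diamond\alpha\to(\Box(\alpha\to\beta)\to(\Box\alpha\to\Box\beta))$; (K1') $\Diamond\neg\beta\to(\Box(\alpha\to\beta)\to(\Diamond\alpha\to\Diamond\beta))$; (K2') $\Diamond\alpha\to(\Diamond(\alpha\to\beta)\to(\Box\alpha\to\Diamond\beta))$;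 (M3') $(\Diamond\alpha\vee\Diamond\neg\alpha)\to(\Diamond\beta\to\Diamond(\alpha\to\beta))$; (M4') $\Diamond\neg\beta\to(\Diamond\neg\alpha\to\Diamond(\alpha\to\beta))$; (I1) $(\Box\alpha\wedge\Box\neg\alpha)\to(\Box(\alpha\to\beta)\wedge\Box\neg(\alpha\to\beta))$; (I2) $(\Box\beta\wedge\Box\neg\beta)\to(\Box(\alpha\to\beta)\wedge\Box\neg(\alpha\to\beta))$; (M1) $\neg\Diamond\alpha\to\Box(\alpha\to\beta)$; (M2) $\Box\beta\to\Box(\alpha\to\beta)$; (DN1) $\Box\alpha\to\Box\neg\neg\alpha$; (DN2) $\Box\neg\neg\alpha\to\Box\alpha$. ${\bf T45m}$: (K) $\Box(\alpha\to\beta)\to(\Box\alpha\to\Box\beta)$; (K1) $\Box(\alpha\to\beta)\to(\Diamond\alpha\to\Diamond\beta)$; (K2) $\Diamond(\alpha\to\beta)\to(\Box\alpha\to\Diamond\beta)$; (M1); (M2); (M3) $\Diamond\beta\to\Diamond(\alpha\to\beta)$; (M4) $\Diamond\neg\alpha\to\Diamond(\alpha\to\beta)$; (T) $\Box\alpha\to\alpha$; (DN1); (DN2); (4) $\Box\alpha\to\Box\Box\alpha$; (5) $\Diamond\Box\alpha\to\Box\alpha$. A (deterministic) logical matrix $\mathcal M=\langle M,D\rangle$ consists of a set $M$ with unary operations for $\neg,\Box$ and a binary operation for $\to$, and $D\subseteq M$; valuations are homomorphisms $h:For\to M$, and $\Gamma\vDash_{\mathcal M}\alpha$ iff every valuation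 mapping $\Gamma$ into $D$ maps $\alpha$ into $D$. *)

From Stdlib Require Import List.





Inductive For : Type :=
  | Var : nat -> For
  | Neg : For -> For
  | Box : For -> For
  | Imp : For -> For -> For.

Definition Dia (a : For) : For := Neg (Box (Neg a)).
Definition Or (a b : For) : For := Imp (Neg a) b.
Definition And (a b : For) : For := Neg (Imp a (Neg b)).

(* A standard Hilbert calculus for classical propositional logic in {~, ->}
   (Mendelson's axioms A1-A3, with modus ponens). *)
Inductive CPL_ax : For -> Prop :=
  | ax_A1 a b : CPL_ax (Imp a (Imp b a))
  | ax_A2 a b c : CPL_ax (Imp (Imp a (Imp b c)) (Imp (Imp a b) (Imp a c)))
  | ax_A3 a b : CPL_ax (Imp (Imp (Neg b) (Neg a)) (Imp (Imp (Neg b) a) b)).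

Inductive Km_modal_ax : For -> Prop :=
  | Km_K' a b : Km_modal_ax (Imp (Dia a) (Imp (Box (Imp a b)) (Imp (Box a) (Box b))))
  | Km_K1' a b : Km_modal_ax (Imp (Dia (Neg b)) (Imp (Box (Imp a b)) (Imp (Dia a) (Dia b))))
  | Km_K2' a b : Km_modal_ax (Imp (Dia a) (Imp (Dia (Imp a b)) (Imp (Box a) (Dia b))))
  | Km_M3' a b : Km_modal_ax (Imp (Or (Dia a) (Dia (Neg a))) (Imp (Dia b) (Dia (Imp a b))))
  | Km_M4' a b : Km_modal_ax (Imp (Dia (Neg b)) (Imp (Dia (Neg a)) (Dia (Imp a b))))
  | Km_I1 a b : Km_modal_ax (Imp (And (Box a) (Box (Neg a)))
                               (And (Box (Imp a b)) (Box (Neg (Imp a b)))))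
  | Km_I2 a b : Km_modal_ax (Imp (And (Box b) (Box (Neg b)))
                               (And (Box (Imp a b)) (Box (Neg (Imp a b)))))
  | Km_M1 a b : Km_modal_ax (Imp (Neg (Dia a)) (Box (Imp a b)))
  | Km_M2 a b : Km_modal_ax (Imp (Box b) (Box (Imp a b)))
  | Km_DN1 a : Km_modal_ax (Imp (Box a) (Box (Neg (Neg a))))
  | Km_DN2 a : Km_modal_ax (Imp (Box (Neg (Neg a))) (Box a)).

Inductive T45m_modal_ax : For -> Prop :=
  | T_K a b : T45m_modal_ax (Imp (Box (Imp a b)) (Imp (Box a) (Box b)))
  | T_K1 a b : T45m_modal_ax (Imp (Box (Imp a b)) (Imp (Dia a) (Dia b)))
  | T_K2 a b : T45m_modal_ax (Imp (Dia (Imp a b)) (Imp (Box a) (Dia b)))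
  | T_M1 a b : T45m_modal_ax (Imp (Neg (Dia a)) (Box (Imp a b)))
  | T_M2 a b : T45m_modal_ax (Imp (Box b) (Box (Imp a b)))
  | T_M3 a b : T45m_modal_ax (Imp (Dia b) (Dia (Imp a b)))
  | T_M4 a b : T45m_modal_ax (Imp (Dia (Neg a)) (Dia (Imp a b)))
  | T_T a : T45m_modal_ax (Imp (Box a) a)
  | T_DN1 a : T45m_modal_ax (Imp (Box a) (Box (Neg (Neg a))))
  | T_DN2 a : T45m_modal_ax (Imp (Box (Neg (Neg a))) (Box a))
  | T_4 a : T45m_modal_ax (Imp (Box a) (Box (Box a)))
  | T_5 a : T45m_modal_ax (Imp (Dia (Box a)) (Box a)).

Definition Km_ax (f : For) : Prop := CPL_ax f \/ Km_modal_ax f.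
Definition T45m_ax (f : For) : Prop := CPL_ax f \/ T45m_modal_ax f.

Inductive derives (Ax : For -> Prop) (Gamma : For -> Prop) : For -> Prop :=
  | d_hyp a : Gamma a -> derives Ax Gamma a
  | d_ax a : Ax a -> derives Ax Gamma a
  | d_mp a b : derives Ax Gamma a -> derives Ax Gamma (Imp a b) -> derives Ax Gamma b.

Definition Km_derives := derives Km_ax.
Definition T45m_derives := derives T45m_ax.

Record matrix := Matrix {
  carrier : Type;
  mneg : carrier -> carrier;
  mbox : carrier -> carrier;
  mimp : carrier -> carrier -> carrier;
  designated : carrier -> Prop
}.

Definition valuation (M : matrix) (h : For -> carrier M) : Prop :=
  (forall a, h (Neg a) = mneg M (h a)) /\
  (forall a, h (Box a) = mbox M (h a)) /\
  (forall a b, h (Imp a b) = mimp M (h a) (h b)).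

Definition matrix_conseq (M : matrix) (Gamma : For -> Prop) (alpha : For) : Prop :=
  forall h : For -> carrier M, valuation M h ->
    (forall g, Gamma g -> designated M (h g)) -> designated M (h alpha).

Definition finite_matrix (M : matrix) : Prop :=
  exists l : list (carrier M), forall x : carrier M, List.In x l.

(* Write [p_i] for [Var (S i)] and [q] for [Var 0], and let [psi i j] be
   [Box (p_i -> p_i) -> Box (p_i -> p_i) -> Box (p_i -> p_j)].  A finite
   matrix must give two variables [p_i], [p_j] (i <> j) the same value, and
   then [psi i j] takes the value of [psi i i], an instance of axiom A1.  So any
   finite matrix sound for Km validates [{psi i j -> q | i <> j} |- q].  In
   the universal S5 model on the naturals where [p_i] holds exactly at world
   [i], every [psi i j] with [i <> j] fails at world 0, and so does [q]; hence
   this consequence is not T45m-derivable. *)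

From Stdlib Require Import List Classical Lia FinFun.

Section UniversalModel.

Variables (W : Type) (V : nat -> W -> Prop).

Fixpoint sat (w : W) (a : For) : Prop :=
  match a with
  | Var k => V k w
  | Neg a => ~ sat w a
  | Box a => forall u, sat u a
  | Imp a b => sat w a -> sat w b
  end.

Lemma T45m_ax_sat (a : For) (w : W) : T45m_ax a -> sat w a.
Proof.
  intros [Ha | Ha]; destruct Ha; simpl; intros;
    repeat match goal with |- _ -> _ => intro end;
    try (apply NNPP; intro; firstorder fail);
    firstorder.
Qed.

Lemma T45m_derives_sat (Gamma : For -> Prop) (a : For) (w : W) :
  T45m_derives Gamma a -> (forall g, Gamma g -> sat w g) -> sat w a.
Proof.
  intros D HGamma; induction D as [a Ha | a Ha | a b _ IHa _ IHab].
  - now apply HGamma.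
  - now apply T45m_ax_sat.
  - exact (IHab IHa).
Qed.

End UniversalModel.

Lemma Finite_nat_collision {A : Type} (f : nat -> A) :
  Finite A -> exists i j, i <> j /\ f i = f j.
Proof.
  intros [l Hl]; apply NNPP; intro Hno.
  assert (Hinj : Injective f).
  { intros i j Hij; apply NNPP; intro Hneq; apply Hno; eauto. }
  assert (Hnodup := Injective_map_NoDup Hinj (seq_NoDup (S (length l)) 0)).
  assert (Hincl : incl (map f (seq 0 (S (length l)))) l) by (intros x _; apply Hl).
  assert (Hlen := NoDup_incl_length Hnodup Hincl).
  rewrite length_map, length_seq in Hlen; lia.
Qed.

Definition prop_var (i : nat) : For := Var (S i).

Definition box_imp (i j : nat) : For := Box (Imp (prop_var i) (prop_var j)).

Definition psi (i j : nat) : For := Imp (box_imp i i) (Imp (box_imp i i) (box_imp i j)).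

Definition collision_premises (g : For) : Prop :=
  exists i j, i <> j /\ g = Imp (psi i j) (Var 0).

Lemma psi_valuation {M : matrix} {h : For -> carrier M} (i j : nat) :
  valuation M h ->
  h (psi i j) = mimp M (h (box_imp i i))
                  (mimp M (h (box_imp i i)) (mbox M (mimp M (h (prop_var i)) (h (prop_var j))))).
Proof.
  intros (_ & Hbox & Himp); unfold psi; rewrite !Himp.
  unfold box_imp at 3; now rewrite Hbox, Himp.
Qed.

Lemma Km_finite_matrix_collision (M : matrix) :
  finite_matrix M ->
  (forall Gamma alpha, Km_derives Gamma alpha -> matrix_conseq M Gamma alpha) ->
  matrix_conseq M collision_premises (Var 0).
Proof.
  intros Hfin Hsound h Hh Hprem.
  destruct (Finite_nat_collision (fun i => h (prop_var i)) Hfin) as (i & j & Hij & Heq).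
  assert (Hpsi : designated M (h (psi i j))).
  { rewrite (psi_valuation i j Hh), <- Heq, <- (psi_valuation i i Hh).
    apply (Hsound (fun _ => False)); [| exact Hh | contradiction].
    apply d_ax; left; apply ax_A1. }
  apply (Hsound (fun g => g = psi i j \/ g = Imp (psi i j) (Var 0))); [| exact Hh |].
  - apply d_mp with (psi i j); apply d_hyp; auto.
  - intros g [-> | ->]; [exact Hpsi | apply Hprem; now exists i, j].
Qed.

Lemma T45m_not_derives_collision : ~ T45m_derives collision_premises (Var 0).
Proof.
  intro D.
  apply (T45m_derives_sat nat (fun k w => k = S w) _ _ 0) in D; [discriminate |].
  intros g (i & j & Hij & ->) Hpsi; simpl in Hpsi.
  assert (Hrefl : forall u, S i = S u -> S i = S u) by auto.
  specialize (Hpsi Hrefl Hrefl i eq_refl).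
  congruence.
Qed.

Theorem mainTheorem4 (S : (For -> Prop) -> For -> Prop) :
  (forall (Gamma : For -> Prop) (alpha : For), Km_derives Gamma alpha -> S Gamma alpha) ->
  (forall (Gamma : For -> Prop) (alpha : For), S Gamma alpha -> T45m_derives Gamma alpha) ->
  ~ (exists M : matrix, finite_matrix M /\
       forall (Gamma : For -> Prop) (alpha : For), S Gamma alpha <-> matrix_conseq M Gamma alpha).
Proof.
  intros HKm HT45m (M & Hfin & HM).
  apply T45m_not_derives_collision, HT45m, HM.
  apply Km_finite_matrix_collision; [exact Hfin |].
  intros Gamma alpha D; now apply HM, HKm.
Qed.
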